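(* Let $N=\{1,\dots,n\}$ be agents and $M$ a finite set of chores, where each agent $i$ has an additive valuation $V_i$ with $V_i(\{j\})\le 0$ for all $j\in M$ and $V_i(M)=-1$, and shares $s_i\in(0,1]$ with $\sum_i s_i=1$. Let $X=\langle X_1,\dots,X_n\rangle$ be the allocation that assigns all chores of $M$ to a single agent with the largest share (ties broken arbitrarily) and nothing to all other agents. Then $V_i(X_i)\ge n\,\mathsf{WMMS}_i$ for every $i\in N$.
   Context: For agent $i$, $\mathsf{WMMS}_i:=\max_{\langle Y_1,\dots,Y_n\rangle\in\Pi(M)}\min_{k\in N}V_i(Y_k)\frac{s_i}{s_k}$, where $\Pi(M)$ is the set of ordered partitions of $M$ into $n$ possibly empty bundles (bundle $Y_k$ for agent $k$). Valuations are additive: $V_i(S)=\sum_{j\in S}V_i(\{j\})$. *)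

From HB Require Import structures.
From mathcomp Require Import all_boot all_order all_algebra.
Set Implicit Arguments. Unset Strict Implicit. Unset Printing Implicit Defensive.
Import Order.TTheory GRing.Theory Num.Theory.
Local Open Scope ring_scope.

(* An ordered partition <Y_1,...,Y_n> of the chore set M into n possibly
   empty bundles is represented by the assignment Y : {ffun M -> 'I_n}
   (chore j goes to agent Y j); bundle k is [set j | Y j == k]. *)
Definition bundle (n : nat) (M : finType) (Y : {ffun M -> 'I_n}) (k : 'I_n)
  : {set M} := [set j | Y j == k].

Definition Vof (R : realFieldType) (n : nat) (M : finType)
  (v : 'I_n -> M -> R) (i : 'I_n) (S : {set M}) : R := \sum_(j in S) v i j.

(* min_{k in N} V_i(Y_k) * s_i / s_k ; min over a nonempty finite range,
   seeded with the k = i term (min is idempotent, so this is exact). *)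
Definition wmin (R : realFieldType) (n : nat) (M : finType)
  (v : 'I_n -> M -> R) (s : 'I_n -> R) (i : 'I_n) (Y : {ffun M -> 'I_n}) : R :=
  \big[Num.min/ Vof v i (bundle Y i) * (s i / s i)]_(k : 'I_n)
     (Vof v i (bundle Y k) * (s i / s k)).

(* WMMS_i = max over ordered partitions Y of wmin; seeded with the value of
   the partition giving everything to agent i (max is idempotent). *)
Definition WMMS (R : realFieldType) (n : nat) (M : finType)
  (v : 'I_n -> M -> R) (s : 'I_n -> R) (i : 'I_n) : R :=
  \big[Num.max/ wmin v s i [ffun=> i]]_(Y : {ffun M -> 'I_n}) wmin v s i Y.

From HB Require Import structures.
From mathcomp Require Import all_boot all_order all_algebra.
Import Order.TTheory GRing.Theory Num.Theory.
Local Open Scope ring_scope.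

(* Chores have nonpositive values, so each term V_i(Y_k) s_i/s_k of WMMS_i is
   at most V_i(Y_k) when s_k <= s_i.  For the agent a with the largest share
   this bounds n WMMS_a by the sum of V_a over the n bundles, which is V_a(M),
   the value of X_a.  Every other agent gets nothing, and WMMS_i <= 0 via the
   term k = i. *)

Section WMMS_bounds.

Variables (R : realFieldType) (n : nat) (M : finType).
Variables (v : 'I_n -> M -> R) (s : 'I_n -> R).

Lemma sum_Vof_bundle (i : 'I_n) (Y : {ffun M -> 'I_n}) :
  \sum_(k < n) Vof v i (bundle Y k) = Vof v i [set: M].
Proof.
rewrite /Vof (partition_big (fun j => Y j) xpredT) //=.
by apply: eq_bigr => k _; apply: eq_bigl => j; rewrite /bundle !inE.
Qed.

Lemma wmin_le (i k : 'I_n) (Y : {ffun M -> 'I_n}) :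
  wmin v s i Y <= Vof v i (bundle Y k) * (s i / s k).
Proof. by rewrite /wmin (bigD1 k) //= ge_min lexx. Qed.

Lemma WMMS_ind (i : 'I_n) (P : R -> Prop) :
  (forall Y, P (wmin v s i Y)) -> P (WMMS v s i).
Proof.
by move=> P_wmin; apply: (big_ind P) => // x y Px Py; case: leP.
Qed.

Hypothesis v_le0 : forall i j, v i j <= 0.
Hypothesis s_gt0 : forall i, 0 < s i.

Lemma Vof_le0 (i : 'I_n) (S : {set M}) : Vof v i S <= 0.
Proof. by apply: sumr_le0 => j _; apply: v_le0. Qed.

Lemma wmin_le_Vof_bundle (i k : 'I_n) (Y : {ffun M -> 'I_n}) :
  s k <= s i -> wmin v s i Y <= Vof v i (bundle Y k).
Proof.
move=> ski; apply: le_trans (wmin_le i k Y) _.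
by rewrite ler_neMr ?Vof_le0 // ler_pdivlMr // mul1r.
Qed.

Lemma WMMS_le0 (i : 'I_n) : WMMS v s i <= 0.
Proof.
apply: (WMMS_ind i (fun w => w <= 0)) => Y.
apply: le_trans (wmin_le_Vof_bundle i i Y (lexx _)) _.
exact: Vof_le0.
Qed.

Lemma WMMS_le_largest_share (a : 'I_n) :
  (forall k, s k <= s a) -> n%:R * WMMS v s a <= Vof v a [set: M].
Proof.
move=> s_le_sa.
apply: (WMMS_ind a (fun w => n%:R * w <= Vof v a [set: M])) => Y.
rewrite -(sum_Vof_bundle a Y) mulr_natl -[n in _ *+ n]card_ord -sumr_const.
by apply: ler_sum => k _; apply: wmin_le_Vof_bundle.
Qed.

End WMMS_bounds.

Lemma bundle_const_self (n : nat) (M : finType) (a : 'I_n) :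
  bundle ([ffun=> a] : {ffun M -> 'I_n}) a = [set: M].
Proof. by apply/setP => j; rewrite /bundle !inE ffunE eqxx. Qed.

Lemma bundle_const_other (n : nat) (M : finType) (a i : 'I_n) :
  i != a -> bundle ([ffun=> a] : {ffun M -> 'I_n}) i = set0.
Proof.
by move=> ia; apply/setP => j; rewrite /bundle !inE ffunE eq_sym (negbTE ia).
Qed.

Theorem lemma2 (R : realFieldType) (n : nat) (M : finType)
  (v : 'I_n -> M -> R) (s : 'I_n -> R)
  (hneg : forall (i : 'I_n) (j : M), v i j <= 0)
  (hnorm : forall i : 'I_n, Vof v i [set: M] = -1)
  (hs : forall i : 'I_n, 0 < s i <= 1)
  (hsum : \sum_(i < n) s i = 1)
  (a : 'I_n) (ha : forall k : 'I_n, s k <= s a) :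
  let X : {ffun M -> 'I_n} := [ffun=> a] in
  forall i : 'I_n, n%:R * WMMS v s i <= Vof v i (bundle X i).
Proof.
move=> X i.
have s_gt0 k : 0 < s k by case/andP: (hs k).
have [-> | ia] := eqVneq i a.
  by rewrite bundle_const_self; apply: WMMS_le_largest_share.
rewrite bundle_const_other // /Vof big_set0.
by rewrite mulr_ge0_le0 // WMMS_le0.
Qed.
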